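(* Let $M$ be a matroid with $\lambda(M)=\sigma(M)=k$ and $\rank(M)=r$, and let $C_1,\ldots,C_\ell$ be all the cocircuits of $M$ of size $k$. Then the crux $\chi(M)=M\setminus(C_1\cup\cdots\cup C_\ell)$ has rank $r-\ell$.
   Context: $\sigma(M)$ is the maximum number of pairwise disjoint bases of $M$; $\lambda(M)$ is the minimum size of a cocircuit (a minimal set meeting every base). The crux $\chi(M)$ of $M$ is the matroid obtained from $M$ by deleting all elements lying in some minimum-size cocircuit; if this removes all elements, $\chi(M)$ is the empty matroid (of rank $0$). *)

From mathcomp Require Import all_boot.
Set Implicit Arguments. Unset Strict Implicit. Unset Printing Implicit Defensive.

Section Matroid.
Variable T : finType.

Definition is_matroid (E : {set T}) (B : {set {set T}}) : Prop :=
  [/\ (forall b, b \in B -> b \subset E),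
      B != set0 &
      (forall b1 b2, b1 \in B -> b2 \in B -> forall x, x \in b1 :\: b2 ->
         exists2 y, y \in b2 :\: b1 & (b1 :\ x) :|: [set y] \in B)].

Definition indep (B : {set {set T}}) (I : {set T}) : bool :=
  [exists b in B, I \subset b].

(* rank of a matroid = size of a base (all bases have equal size) *)
Definition mrank (B : {set {set T}}) : nat := \max_(b in B) #|b|.

Definition delete (E : {set T}) (B : {set {set T}}) (X : {set T}) : {set {set T}} :=
  [set I | maxset (fun J : {set T} => indep B J && (J \subset E :\: X)) I].

Definition cocircuit (E : {set T}) (B : {set {set T}}) (C : {set T}) : bool :=
  minset (fun X : {set T} => (X \subset E) && [forall b in B, ~~ [disjoint X & b]]) C.

Definition lambda_eq (E : {set T}) (B : {set {set T}}) (k : nat) : Prop :=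
  (exists2 C, cocircuit E B C & #|C| = k) /\
  (forall C, cocircuit E B C -> k <= #|C|).

Definition disjoint_bases (B : {set {set T}}) (n : nat) (f : 'I_n -> {set T}) : Prop :=
  (forall i, f i \in B) /\ (forall i j, i != j -> [disjoint f i & f j]).

Definition sigma_eq (B : {set {set T}}) (k : nat) : Prop :=
  (exists f : 'I_k -> {set T}, disjoint_bases B f) /\
  (forall g : 'I_k.+1 -> {set T}, ~ disjoint_bases B g).

Definition min_cocircuits (E : {set T}) (B : {set {set T}}) (k : nat) : {set {set T}} :=
  [set C | cocircuit E B C & #|C| == k].

Definition crux_bases (E : {set T}) (B : {set {set T}}) (k : nat) : {set {set T}} :=
  delete E B (\bigcup_(C in min_cocircuits E B k) C).

End Matroid.

From mathcomp Require Import all_boot zify.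
Set Implicit Arguments. Unset Strict Implicit. Unset Printing Implicit Defensive.

(* Let M have k pairwise disjoint bases and cocircuits of size k, and let
   mc be the set of its k-element cocircuits, with union X.  Fix one of the
   disjoint bases, b1.
   - Pigeonhole: a k-set meeting each of k pairwise disjoint sets meets each
     of them exactly once; so every C in mc meets b1 in a single point.
   - A cocircuit meeting a base b1 in exactly {x} is determined by b1 and x
     (it is the fundamental cocircuit of x), so C |-> C :&: b1 is injective
     on mc and #|b1 :&: X| = #|mc|.
   - Rank of M \ X: b1 :\: X is independent in M \ X, giving the lower bound
     #|b1| - #|b1 :&: X|; conversely an independent I avoiding X extends to
     a base b' inside I :|: b1, and b' must contain the point of every
     C in mc, i.e. all of b1 :&: X, giving the matching upper bound. *)

Lemma meets_each_once (T : finType) k (f : 'I_k -> {set T}) (C : {set T}) :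
  (forall i j, i != j -> [disjoint f i & f j]) -> #|C| <= k ->
  (forall i, ~~ [disjoint C & f i]) -> forall i, #|C :&: f i| = 1.
Proof.
move=> disf Ck meetC.
pose F i := C :&: f i.
have F_nonempty i : 0 < #|F i| by rewrite card_gt0 setI_eq0.
have [trivF injF] : trivIset (F @: setT) /\ {in setT &, injective F}.
  apply: trivIimset => [i j _ _ /disf dji|].
    apply: disjointWl (subsetIr _ _) _; apply: disjointWr (subsetIr _ _) _.
    by rewrite disjoint_sym.
  by apply/imsetP => -[i _ F0]; move: (F_nonempty i); rewrite -F0 cards0.
have sum_le : \sum_(i < k) #|F i| <= \sum_(i < k) 1.
  have -> : \sum_(i < k) #|F i| = \sum_(i in [set: 'I_k]) #|F i|.
    by apply: eq_bigl => i; rewrite inE.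
  rewrite sum1_card card_ord -(big_imset (fun A : {set T} => #|A|) injF) /=.
  have /eqP <- : #|cover (F @: setT)| == \sum_(A in F @: setT) #|A|.
    by rewrite (leq_card_cover _).2.
  apply: leq_trans Ck; apply: subset_leq_card.
  by rewrite cover_imset; apply/bigcupsP => i _; apply: subsetIl.
have [ge_sum eq_sum] :=
  @leqif_sum _ xpredT _ _ _ (fun i _ => leqif_eq (F_nonempty i)).
move: eq_sum; rewrite eqn_leq ge_sum sum_le => /esym/forall_inP one_each i.
exact/esym/eqP/one_each.
Qed.

Section Bases.
Variables (T : finType) (E : {set T}) (B : {set {set T}}).
Hypothesis matroidB : is_matroid E B.
Implicit Types (I C D S b : {set T}).

(* Repeated basis exchange: if S contains a base b, any base b0 can be
   moved inside S, keeping its size and the elements it already has in S. *)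
Lemma base_within b0 b S : b0 \in B -> b \in B -> b \subset S ->
  exists2 b', b' \in B & [/\ #|b'| = #|b0|, b' \subset S & b0 :&: S \subset b'].
Proof.
have [_ _ exchange] := matroidB.
move=> + bB bS; move: {2}#|b0 :\: S| (leqnn #|b0 :\: S|) => n.
elim: n b0 => [|n IH] b0 out_le b0B.
  exists b0 => //; split=> //; last exact: subsetIl.
  by rewrite -setD_eq0 -cards_eq0 -leqn0.
have [/eqP|[x xout]] := set_0Vmem (b0 :\: S).
  by rewrite setD_eq0 => b0S; exists b0 => //; split=> //; apply: subsetIl.
have xb : x \in b0 :\: b.
  move: xout; rewrite !inE => /andP [xS ->]; rewrite andbT.
  by apply: contra xS; apply: subsetP.
have [y yb b1B] := exchange _ _ b0B bB x xb.
move: xout yb; rewrite !inE => /andP [xS xb0] /andP [yb0 yb].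
set b1 := (b0 :\ x) :|: [set y] in b1B.
have card_b1 : #|b1| = #|b0|.
  by rewrite /b1 setUC cardsU1 !inE (negbTE yb0) andbF (cardsD1 x b0) xb0.
have out_b1 : b1 :\: S = (b0 :\: S) :\ x.
  apply/setP => z; rewrite !inE; case: (eqVneq z y) => [->|_] /=.
    by rewrite (subsetP bS _ yb) (negbTE yb0) !andbF.
  by rewrite orbF andbCA.
have in_b1 : b0 :&: S \subset b1.
  apply/subsetP => z; rewrite !inE => /andP [zb0 zS].
  by rewrite zb0 andbT; apply/orP; left; apply: contraNneq xS => <-.
have out_b1_le : #|b1 :\: S| <= n.
  by rewrite out_b1 -ltnS (leq_trans _ out_le) // (cardsD1 x (b0 :\: S)) !inE xS xb0.
have [b' b'B [card_b' b'S in_b']] := IH b1 out_b1_le b1B.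
exists b' => //; split=> //; first by rewrite card_b' card_b1.
by apply: subset_trans in_b'; rewrite subsetI in_b1 subsetIr.
Qed.

Lemma base_card_eq b1 b2 : b1 \in B -> b2 \in B -> #|b1| = #|b2|.
Proof.
have card_le c1 c2 : c1 \in B -> c2 \in B -> #|c1| <= #|c2|.
  move=> c1B c2B; have [c' _ [<- c'c2 _]] := base_within c1B c2B (subxx c2).
  exact: subset_leq_card.
by move=> b1B b2B; apply/eqP; rewrite eqn_leq !card_le.
Qed.

Lemma mrank_base b : b \in B -> mrank B = #|b|.
Proof.
move=> bB; apply/eqP; rewrite eqn_leq (leq_bigmax_cond _ bB) andbT.
by apply/bigmax_leqP => b' b'B; rewrite (base_card_eq b'B bB).
Qed.

Lemma indep_extend_within I b0 b : b0 \in B -> I \subset b0 -> b \in B ->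
  exists2 b', b' \in B & (I \subset b') && (b' \subset I :|: b).
Proof.
move=> b0B Ib0 bB.
have [b' b'B [_ b'S inb']] := base_within b0B bB (subsetUr I b).
exists b' => //; rewrite b'S andbT; apply: subset_trans inb'.
by rewrite subsetI Ib0 subsetUl.
Qed.

Lemma cocircuit_meets C b : cocircuit E B C -> b \in B ->
  exists2 z, z \in C & z \in b.
Proof.
case/minsetP => /andP [_ /forall_inP meets] _ /meets.
by rewrite -setI_eq0 => /set0Pn [z]; rewrite inE => /andP []; exists z.
Qed.

(* Uniqueness of fundamental cocircuits: two cocircuits meeting a base b1
   in the same single point x are nested (hence equal).  For e in C other
   than x, minimality of C gives a base b2 with C :&: b2 \subset [set e];
   extending b1 :\ x inside (b1 :\ x) :|: b2 yields the base
   (b1 :\ x) :|: [set e], which D must meet, and only at e. *)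
Lemma fundamental_cocircuit_sub b1 C D x : b1 \in B ->
  cocircuit E B C -> cocircuit E B D -> C :&: b1 = [set x] -> D :&: b1 = [set x] ->
  C \subset D.
Proof.
move=> b1B cocC cocD Cb1 Db1.
have off_base F z : F :&: b1 = [set x] -> z \in F -> z \notin b1 :\ x.
  move=> Fb1 zF; apply/setD1P => -[zx zb1].
  by move/setP/(_ z): Fb1; rewrite !inE zF zb1 (negbTE zx).
have xD : x \in D by move/setP/(_ x): Db1; rewrite !inE eqxx => /andP [].
apply/subsetP => e eC; have [-> // | ex] := eqVneq e x.
have [b2 b2B Ce_b2] : exists2 b2, b2 \in B & [disjoint C :\ e & b2].
  have [/andP [CE _] Cmin] := minsetP cocC.
  have : ~~ [forall b in B, ~~ [disjoint C :\ e & b]].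
    apply/negP => Ce_meets.
    have /setP/(_ e) : C :\ e = C.
      by apply: Cmin; rewrite ?subsetDl // Ce_meets (subset_trans (subsetDl C _) CE).
    by rewrite !inE eqxx eC.
  by rewrite negb_forall_in => /exists_inP [b2 b2B /negbNE]; exists b2.
have [b' b'B /andP [sub_b' b'_sub]] :=
  indep_extend_within b1B (subsetDl b1 [set x]) b2B.
have meet_b' F z : F :&: b1 = [set x] -> z \in F -> z \in b' ->
    z \in b' :\: (b1 :\ x).
  by move=> Fb1 zF zb'; rewrite inE zb' (off_base _ _ Fb1 zF).
have [z zC zb'] := cocircuit_meets cocC b'B.
have ez : z = e.
  apply: contraTeq (subsetP b'_sub _ zb') => ze.
  rewrite inE (negbTE (off_base _ _ Cb1 zC)) /=.
  by rewrite (disjointFr Ce_b2) // !inE ze zC.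
have [w wD wb'] := cocircuit_meets cocD b'B.
have /cards1P [a new_b'] : #|b' :\: (b1 :\ x)| == 1.
  rewrite cardsD (setIidPr sub_b') (base_card_eq b'B b1B) (cardsD1 x b1).
  by move/setP/(_ x): Cb1; rewrite !inE eqxx => /andP [_ ->]; rewrite addnK.
have := meet_b' _ _ Cb1 zC zb'; have := meet_b' _ _ Db1 wD wb'.
by rewrite new_b' !inE => /eqP wa /eqP za; rewrite -ez za -wa.
Qed.

Lemma delete_base_large b X : b \in B ->
  exists2 I, I \in delete E B X & #|b :\: X| <= #|I|.
Proof.
have [sub_E _ _] := matroidB; move=> bB.
have indep_bX : indep B (b :\: X) && (b :\: X \subset E :\: X).
  by rewrite setSD ?sub_E // andbT; apply/exists_inP; exists b; rewrite ?subsetDl.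
have [I maxI sub_I] :=
  maxset_exists (P := fun J => indep B J && (J \subset E :\: X)) indep_bX.
by exists I; [rewrite inE | apply: subset_leq_card].
Qed.

End Bases.

Section DeleteCocircuits.
Variables (T : finType) (E : {set T}) (B : {set {set T}}).
Variables (b1 : {set T}) (mc : {set {set T}}).
Hypotheses (matroidB : is_matroid E B) (b1B : b1 \in B).
Hypothesis mc_cocircuit : forall C, C \in mc -> cocircuit E B C.
Hypothesis mc_single : forall C, C \in mc -> #|C :&: b1| = 1.
Local Notation X := (\bigcup_(C in mc) C).

(* The points C :&: b1 are distinct singletons, one per member of mc. *)
Lemma card_base_meet_union : #|b1 :&: X| = #|mc|.
Proof.
pose P := (fun C => C :&: b1) @: mc.
have inj_meet : {in mc &, injective (fun C => C :&: b1)}.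
  move=> C D Cmc Dmc /= CD; have /cards1P [x Cx] := introT eqP (mc_single Cmc).
  have Dx : D :&: b1 = [set x] by rewrite -CD.
  apply/eqP; rewrite eqEsubset.
  by rewrite !(fundamental_cocircuit_sub matroidB b1B _ _ Cx Dx,
               fundamental_cocircuit_sub matroidB b1B _ _ Dx Cx) ?mc_cocircuit.
have trivP : trivIset P.
  apply/trivIsetP => _ _ /imsetP [C Cmc ->] /imsetP [D Dmc ->].
  have /cards1P [x ->] := introT eqP (mc_single Cmc).
  have /cards1P [y ->] := introT eqP (mc_single Dmc).
  by rewrite disjoints1 inE; apply: contraNneq => ->.
have coverP : cover P = b1 :&: X.
  rewrite cover_imset; apply/setP => z; rewrite inE.
  apply/bigcupP/andP => [[C Cmc] | [zb1 /bigcupP [C Cmc zC]]].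
    by rewrite inE => /andP [zC zb1]; split=> //; apply/bigcupP; exists C.
  by exists C; rewrite // inE zC.
rewrite -coverP.
have /eqP -> : #|cover P| == \sum_(A in P) #|A| by rewrite (leq_card_cover P).2.
rewrite -(card_in_imset inj_meet) -/P -sum1_card.
by apply: eq_bigr => _ /imsetP [C Cmc ->]; apply: mc_single.
Qed.

(* Upper bound: a base I of M \ X extends to a base b' inside I :|: b1,
   and b' contains the point of b1 in each C of mc, since C meets b'
   but not I. *)
Lemma delete_base_small I : I \in delete E B X -> #|I| + #|b1 :&: X| <= #|b1|.
Proof.
rewrite inE => /maxsetp /andP [/exists_inP [b0 b0B Ib0] I_EX].
have [b' b'B /andP [Ib' b'_sub]] := indep_extend_within matroidB b0B Ib0 b1B.
have IX : [disjoint I & X].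
  by rewrite disjoints_subset (subset_trans I_EX) // setDE subsetIr.
have b1X_b' : b1 :&: X \subset b'.
  apply/subsetP => x; rewrite inE => /andP [xb1 /bigcupP [C Cmc xC]].
  have /cards1P [y Cy] := introT eqP (mc_single Cmc).
  have [z zC zb'] := cocircuit_meets (mc_cocircuit Cmc) b'B.
  have zX : z \in X by apply/bigcupP; exists C.
  have zb1 : z \in b1.
    move: (subsetP b'_sub _ zb'); rewrite inE => /orP [zI|//].
    by rewrite (disjointFr IX zI) in zX.
  have single z' : z' \in C -> z' \in b1 -> z' = y.
    by move=> z'C z'b1; apply/set1P; rewrite -Cy inE z'C z'b1.
  by rewrite (single _ xC xb1) -(single _ zC zb1).
have /eqP <- : #|I :|: (b1 :&: X)| == #|I| + #|b1 :&: X|.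
  by rewrite (leq_card_setU _ _).2 (disjointWr (subsetIr b1 X) IX).
by rewrite -(base_card_eq matroidB b'B b1B) subset_leq_card // subUset Ib' b1X_b'.
Qed.

Lemma mrank_delete_cocircuits : mrank (delete E B X) + #|mc| = mrank B.
Proof.
rewrite -card_base_meet_union (mrank_base matroidB b1B).
have [I0 I0del I0_large] := delete_base_large matroidB X b1B.
have meet_le : #|b1 :&: X| <= #|b1| by apply/subset_leq_card/subsetIl.
have rank_le : mrank (delete E B X) <= #|b1| - #|b1 :&: X|.
  apply/bigmax_leqP => I Idel; rewrite leq_subRL // addnC.
  exact: delete_base_small.
have rank_ge : #|I0| <= mrank (delete E B X) by apply: leq_bigmax_cond.
move: I0_large; rewrite cardsD.
lia.
Qed.

End DeleteCocircuits.

(* The crux is the deletion of the k-cocircuits; by pigeonhole each of them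
   meets each of the k disjoint bases exactly once, so the previous section
   applies with b1 any of these bases. *)
Theorem mainTheorem9 (T : finType) (E : {set T}) (B : {set {set T}})
  (k r : nat) :
  is_matroid E B ->
  lambda_eq E B k -> sigma_eq B k ->
  mrank B = r ->
  mrank (crux_bases E B k) + #|min_cocircuits E B k| = r.
Proof.
move=> matroidB [[C0 cocC0 card_C0] _] [[f [fB f_disj]] _] <-.
have [_ /set0Pn [b bB] _] := matroidB.
have k_gt0 : 0 < k.
  have [z zC0 _] := cocircuit_meets cocC0 bB.
  by rewrite -card_C0 card_gt0; apply/set0Pn; exists z.
apply: (mrank_delete_cocircuits (b1 := f (Ordinal k_gt0))) => // C;
  rewrite inE => /andP [cocC /eqP card_C] //.
apply: (meets_each_once f_disj) => [|i]; first by rewrite card_C.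
apply/negP => disj; have [z zC zf] := cocircuit_meets cocC (fB i).
by rewrite (disjointFr disj zC) in zf.
Qed.
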